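(* Let $m\le n$, $K\in\{0,\ldots,m-1\}$, $\gamma>0$, $\mathcal{C}\subset\mathrm{dom} f\subset\mathbb{R}^{m\times n}$ satisfy condition (C1), and suppose $f+\delta_{\mathcal C}$ is directionally differentiable and Lipschitz continuous on its domain $\mathcal C$ with constant $M$ with respect to the nuclear norm. Then every d-stationary point $X^*$ of $\min_X f(X)+\gamma\mathcal{T}_K(X)+\delta_{\mathcal C}(X)$ satisfies $\mathcal{T}_K(X^* )=0$ provided $\gamma>M$.
   Context: $\mathcal{T}_K(X)=\sum_{i=K+1}^{\min\{m,n\}}\sigma_i(X)$ (singular values in decreasing order); nuclear norm $\|X\|_*=\sum_i\sigma_i(X)$. $\delta_{\mathcal C}$ = indicator of $\mathcal C$. Feasible cone $\mathcal{F}(X;\mathcal{C})=\{D\mid \exists\varsigma'>0:\ X+\varsigma D\in\mathcal{C}\ \forall\varsigma\in(0,\varsigma')\}$. Directional differentiability: $h'(X;D)=\lim_{\varsigma\searrow0}(h(X+\varsigma D)-h(X))/\varsigma$ exists in $\mathbb R$ for $X\in\mathrm{dom}\,h$, $D\in\mathcal F(X;\mathrm{dom}\,h)$. Condition (C1): every $X\in\mathcal C$ has an SVD $X=U[\mathrm{diag}(\sigma_1(X),\ldots,\sigma_m(X)),0]V^\top$ with $-U[\mathrm{diag}(0,\ldots,0,\sigma_{K+1}(X),\ldots,\sigma_m(X)),0]V^\top\in\mathcal{F}(X;\mathcal C)$. $X^*$ is d-stationary if the objective's directional derivative at $X^*$ is $\ge0$ for all $D\in\mathcal F(X^*;\mathcal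 C)$. *)

From HB Require Import structures.
From mathcomp Require Import all_boot all_order all_algebra.
From mathcomp Require Import all_classical all_reals all_analysis.
Set Implicit Arguments. Unset Strict Implicit. Unset Printing Implicit Defensive.
Import Order.TTheory GRing.Theory Num.Theory.
Import numFieldNormedType.Exports.
Local Open Scope classical_set_scope.
Local Open Scope ring_scope.

Section Defs.
Variables (R : realType) (m n : nat).
Local Notation mat := 'M[R]_(m, n).

Definition rdiag (s : nat -> R) : mat :=
  \matrix_(i < m, j < n) (if (i : nat) == j then s i else 0).

Definition is_svd (X : mat) (U : 'M[R]_m) (s : nat -> R) (V : 'M[R]_n) :=
  [/\ U^T *m U = 1%:M, V^T *m V = 1%:M,
      X = U *m rdiag s *m V^T &
      [/\ (forall i, 0 <= s i),
      (forall i j, (i <= j)%N -> (j < minn m n)%N -> s j <= s i) &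
      (forall i, (minn m n <= i)%N -> s i = 0)]].

(* singular values sigma X i = sigma_{i+1}(X) in the paper's 1-based notation,
   in decreasing order (chosen from some SVD; they are unique) *)
Definition sigma (X : mat) : nat -> R :=
  xget (fun=> 0) (fun s => exists U V, is_svd X U s V).

Definition TK (K : nat) (X : mat) : R := \sum_(K <= i < minn m n) sigma X i.

Definition nucnorm (X : mat) : R := \sum_(0 <= i < minn m n) sigma X i.

Definition feas_cone (C : set mat) (X : mat) : set mat :=
  fun D => exists2 s' : R, 0 < s' &
    forall s : R, 0 < s -> s < s' -> C (X + s *: D).

Definition condC1 (K : nat) (C : set mat) :=
  forall X, C X -> exists U V,
    [/\ U^T *m U = 1%:M, V^T *m V = 1%:M,
        X = U *m rdiag (sigma X) *m V^T &
        feas_cone C X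
          (- (U *m rdiag (fun i => if (i < K)%N then 0 else sigma X i) *m V^T))].

Definition dquot (h : mat -> R) (X D : mat) : R -> R :=
  fun t => (h (X + t *: D) - h X) / t.

(* directional differentiability of h + delta_C (h real valued on C):
   for X in C = dom (h + delta_C), D in F(X;C), the limit exists in R *)
Definition dir_diff_on (h : mat -> R) (C : set mat) :=
  forall X D, C X -> feas_cone C X D ->
    exists L : R, dquot h X D @ 0^'+ --> L.

Definition lipschitz_nuc_on (h : mat -> R) (C : set mat) (M : R) :=
  forall X Y, C X -> C Y -> `|h X - h Y| <= M * nucnorm (X - Y).

(* d-stationarity of X for min_X phi(X) + delta_C(X) (phi real valued on C) *)
Definition d_stationary (phi : mat -> R) (C : set mat) (X : mat) :=
  C X /\ forall D, feas_cone C X D ->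
    exists2 L : R, dquot phi X D @ 0^'+ --> L & 0 <= L.

End Defs.

(* Singular values are well defined because their squares are the eigenvalues
   of the Gram matrix X^T X.  Along the direction D = -U [diag(0,..,0,sigma_K+1,..), 0] V^T
   of condition (C1), X + tD has singular values sigma_i for i <= K and
   (1 - t) sigma_i beyond, so T_K decreases by exactly t T_K(X), while f changes
   by at most M ||tD||_* <= M t T_K(X).  The directional derivative of the
   objective along D is therefore at most (M - gamma) T_K(X) < 0 unless
   T_K(X) = 0. *)
From HB Require Import structures.
From mathcomp Require Import all_boot all_order all_algebra.
From mathcomp Require Import all_classical all_reals all_analysis.
From mathcomp Require Import ring lra.
Set Implicit Arguments. Unset Strict Implicit. Unset Printing Implicit Defensive.
Import Order.TTheory GRing.Theory Num.Theory.
Local Open Scope classical_set_scope.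
Local Open Scope ring_scope.

Lemma char_poly_orthogonal_conj (R : comUnitRingType) k (V A : 'M[R]_k) :
  V^T *m V = 1%:M -> char_poly (V *m A *m V^T) = char_poly A.
Proof.
move=> VTV; have VVT : V *m V^T = 1%:M by apply: mulmx1C.
set P := map_mx (@polyC R) V; set Q := map_mx (@polyC R) V^T.
have PQ : P *m Q = 1%:M by rewrite -map_mxM VVT map_mx1.
rewrite /char_poly; have -> : char_poly_mx (V *m A *m V^T) = P *m char_poly_mx A *m Q.
  rewrite /char_poly_mx mulmxBr mulmxBl scalar_mxC.
  by rewrite -[_ *m P *m Q]mulmxA PQ mulmx1 !map_mxM.
rewrite !det_mulmx mulrC mulrA -det_mulmx.
by rewrite [Q *m P]mulmx1C // det1 mul1r.
Qed.

Section SingularValues.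
Variables (R : realType) (m n : nat).
Local Notation mat := 'M[R]_(m, n).

Definition singular_value_seq (s : nat -> R) :=
  [/\ (forall i, 0 <= s i),
      (forall i j, (i <= j)%N -> (j < minn m n)%N -> s j <= s i) &
      (forall i, (minn m n <= i)%N -> s i = 0)].

Definition sqr_diag (s : nat -> R) (j : nat) : R :=
  if (j < minn m n)%N then s j ^+ 2 else 0.

Lemma rdiagD (a b : nat -> R) :
  rdiag m n (fun i => a i + b i) = rdiag m n a + rdiag m n b.
Proof. by apply/matrixP => i j; rewrite !mxE; case: eqP; rewrite ?addr0. Qed.

Lemma rdiagZ (c : R) (b : nat -> R) :
  rdiag m n (fun i => c * b i) = c *: rdiag m n b.
Proof. by apply/matrixP => i j; rewrite !mxE; case: eqP; rewrite ?mulr0. Qed.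

Lemma rdiag_gram (s : nat -> R) :
  (rdiag m n s)^T *m rdiag m n s = diag_mx (\row_(j < n) sqr_diag s j).
Proof.
apply/matrixP => j k; rewrite !mxE /sqr_diag.
under eq_bigr => i _ do rewrite !mxE.
have jn := ltn_ord j; case: (ltnP j m) => jm.
- have -> : (j < minn m n)%N by rewrite leq_min jm.
  rewrite (bigD1 (Ordinal jm)) //= big1 ?addr0; last first.
    move=> i ij; have -> : ((i : nat) == j) = (i == Ordinal jm) by [].
    by rewrite (negbTE ij) mul0r.
  rewrite eqxx; case: (eqVneq j k) => [->|jk]; first by rewrite eqxx expr2.
  have -> : ((Ordinal jm : nat) == k) = (j == k) by [].
  by rewrite (negbTE jk) mulr0 mulr0n.
- have -> : (j < minn m n)%N = false by rewrite leq_min ltnNge jm.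
  rewrite mul0rn big1 // => i _.
  have /negbTE -> : (i : nat) != j by rewrite neq_ltn (leq_trans (ltn_ord i) jm).
  by rewrite mul0r.
Qed.

Lemma char_poly_gram (U : 'M[R]_m) (V : 'M[R]_n) s :
  U^T *m U = 1%:M -> V^T *m V = 1%:M ->
  let Y := U *m rdiag m n s *m V^T in
  char_poly (Y^T *m Y) = \prod_(x <- map (sqr_diag s) (iota 0 n)) ('X - x%:P).
Proof.
move=> UTU VTV Y.
have -> : Y^T *m Y = V *m ((rdiag m n s)^T *m rdiag m n s) *m V^T.
  rewrite /Y !trmx_mul trmxK !mulmxA; congr (_ *m _); rewrite -!mulmxA.
  by congr (_ *m _); rewrite [U^T *m _]mulmxA UTU mul1mx.
rewrite char_poly_orthogonal_conj // rdiag_gram char_poly_trig ?diag_mx_is_trig //.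
rewrite big_map -[n in iota 0 n]subn0 big_mkord.
by apply: eq_bigr => i _; rewrite !mxE eqxx mulr1n.
Qed.

Lemma perm_eq_sqr_diag (U1 U2 : 'M[R]_m) (V1 V2 : 'M[R]_n) s1 s2 :
  U1^T *m U1 = 1%:M -> V1^T *m V1 = 1%:M ->
  U2^T *m U2 = 1%:M -> V2^T *m V2 = 1%:M ->
  U1 *m rdiag m n s1 *m V1^T = U2 *m rdiag m n s2 *m V2^T ->
  perm_eq (map (sqr_diag s1) (iota 0 n)) (map (sqr_diag s2) (iota 0 n)).
Proof.
move=> U1o V1o U2o V2o e; apply: prod_XsubC_eq.
by rewrite -(char_poly_gram s1 U1o V1o) /= e (char_poly_gram s2 U2o V2o).
Qed.

Lemma sorted_sqr_diag s : singular_value_seq s ->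
  sorted (fun x y => y <= x) (map (sqr_diag s) (iota 0 n)).
Proof.
case=> s_ge0 s_dec _; apply: (homo_sorted (e := leq)); last exact: iota_sorted.
move=> i j ij; rewrite /sqr_diag; case: (ltnP j (minn m n)) => jmn.
  rewrite (leq_ltn_trans ij jmn); have := s_dec i j ij jmn; have := s_ge0 j; nra.
by case: ifP => _; rewrite ?sqr_ge0.
Qed.

Lemma svd_unique (Y : mat) U1 s1 V1 U2 s2 V2 :
  is_svd Y U1 s1 V1 -> is_svd Y U2 s2 V2 -> s1 = s2.
Proof.
case=> U1o V1o e1 ok1; case=> U2o V2o e2 ok2.
have P := perm_eq_sqr_diag U1o V1o U2o V2o (etrans (esym e1) e2).
have ge_trans : transitive (fun x y : R => y <= x).
  by move=> x y z /= yx zy; apply: le_trans zy yx.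
have ge_anti : antisymmetric (fun x y : R => y <= x).
  by move=> x y /andP[yx xy]; apply/le_anti; rewrite yx xy.
have E := sorted_eq ge_trans ge_anti (sorted_sqr_diag ok1) (sorted_sqr_diag ok2) P.
case: ok1 ok2 => [ge1 _ z1] [ge2 _ z2].
apply/funext => j; case: (ltnP j (minn m n)) => jmn; last by rewrite z1 ?z2.
have jn : (j < n)%N by rewrite (leq_trans jmn) ?geq_minr.
move: (congr1 (fun l => nth 0 l j) E) => /=.
rewrite !(nth_map 0%N) ?size_iota // nth_iota // add0n /sqr_diag jmn => ej.
by rewrite -(ger0_norm (ge1 j)) -(ger0_norm (ge2 j)) -!sqrtr_sqr ej.
Qed.

(* [sigma Y] is the junk value [fun=> 0] when [Y] has no SVD. *)
Lemma sigmaP (Y : mat) :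
  (exists U V, is_svd Y U (sigma Y) V) \/ sigma Y = (fun=> 0).
Proof. by rewrite /sigma; case: xgetP => [x _ H|H]; [left|right]. Qed.

Lemma sigma_svd (Y : mat) U s V : is_svd Y U s V -> sigma Y = s.
Proof.
move=> Ysvd; have [U' [V' Ysvd']] : exists U V, is_svd Y U (sigma Y) V.
  by apply: (@xgetI _ _ (fun s => exists U V, is_svd Y U s V) s); exists U, V.
exact: svd_unique Ysvd' Ysvd.
Qed.

Lemma sigma_ge0 (Y : mat) i : 0 <= sigma Y i.
Proof. by case: (sigmaP Y) => [[U [V [_ _ _ [->]]]]|->]. Qed.

Lemma TK_ge0 K (Y : mat) : 0 <= TK K Y.
Proof. by apply: sumr_ge0 => i _; apply: sigma_ge0. Qed.

Lemma sum_sqrt_sqr_diag s :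
  \sum_(x <- map (sqr_diag s) (iota 0 n)) Num.sqrt x =
  \sum_(0 <= i < minn m n) `|s i|.
Proof.
rewrite big_map (_ : iota 0 n = index_iota 0 n); last by rewrite /index_iota subn0.
rewrite (big_cat_nat _ (n := minn m n)) ?geq_minr //= [X in _ + X]big1_seq ?addr0.
  by apply: eq_big_nat => i /andP[_ imn]; rewrite /sqr_diag imn sqrtr_sqr.
move=> i /andP[_]; rewrite mem_index_iota => /andP[mni _].
by rewrite /sqr_diag ltnNge mni /= sqrtr0.
Qed.

Lemma nucnorm_le_orthogonal (Y : mat) U s V :
  U^T *m U = 1%:M -> V^T *m V = 1%:M -> Y = U *m rdiag m n s *m V^T ->
  nucnorm Y <= \sum_(0 <= i < minn m n) `|s i|.
Proof.
move=> Uo Vo eY; rewrite /nucnorm.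
case: (sigmaP Y) => [[U' [V' [U'o V'o eY' [ge0 _ _]]]]|->].
  have P := perm_eq_sqr_diag U'o V'o Uo Vo (etrans (esym eY') eY).
  rewrite -sum_sqrt_sqr_diag -(perm_big _ P) sum_sqrt_sqr_diag le_eqVlt.
  by apply/orP; left; apply/eqP/eq_big_nat => i _; rewrite ger0_norm.
by rewrite big1 //; apply: sumr_ge0 => i _; apply: normr_ge0.
Qed.

End SingularValues.

Definition drop_head (K : nat) (R : nmodType) (s : nat -> R) (i : nat) : R :=
  if (i < K)%N then 0 else s i.

Lemma sum_drop_head (R : nmodType) K p (s : nat -> R) :
  \sum_(0 <= i < p) drop_head K s i = \sum_(K <= i < p) s i.
Proof.
case: (leqP K p) => [Kp|pK]; last first.
  rewrite [RHS]big_geq ?(ltnW pK) // big1_seq // => i; rewrite mem_index_iota.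
  by move=> /andP[_ /andP[_ ip]]; rewrite /drop_head (ltn_trans ip pK).
rewrite (big_cat_nat _ (n := K)) //= big1_seq ?add0r; last first.
  by move=> i /andP[_]; rewrite mem_index_iota => /andP[_ iK]; rewrite /drop_head iK.
by apply: eq_big_nat => i /andP[Ki _]; rewrite /drop_head ltnNge Ki.
Qed.

Section AlongTail.
Variables (R : realType) (m n K : nat) (X : 'M[R]_(m, n)).
Variables (U : 'M[R]_m) (V : 'M[R]_n).
Hypothesis Xsvd : is_svd X U (sigma X) V.
Local Notation D := (- (U *m rdiag m n (drop_head K (sigma X)) *m V^T)).

Lemma TK_along_tail t : 0 <= t <= 1 -> TK K (X + t *: D) = (1 - t) * TK K X.
Proof.
move=> /andP[t0 t1]; case: (Xsvd) => Uo Vo eX [ge0 dec zero].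
pose st i := sigma X i + - t * drop_head K (sigma X) i.
have XtD_svd : is_svd (X + t *: D) U st V.
  split=> //; first by rewrite rdiagD rdiagZ mulmxDr mulmxDl -eX
    scalerN -scaleNr -scalemxAr -scalemxAl.
  rewrite /st /drop_head; split.
  - by move=> i; case: ifP => _; have := ge0 i; nra.
  - move=> i j ij jmn; case: (ltnP j K) => jK.
      by rewrite (leq_ltn_trans ij jK) !mulr0 !addr0; apply: dec.
    have := dec i j ij jmn; have := ge0 j; have := ge0 i.
    by case: ifP => _; nra.
  - by move=> i mni; rewrite zero //; case: ifP => _; rewrite ?mulr0 addr0.
rewrite /TK (sigma_svd XtD_svd) mulr_sumr; apply: eq_big_nat => i /andP[Ki _].
by rewrite /st /drop_head ltnNge Ki /=; ring.
Qed.

Lemma nucnorm_along_tail t : 0 <= t -> nucnorm (X - (X + t *: D)) <= t * TK K X.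
Proof.
move=> t0; case: (Xsvd) => Uo Vo _ [ge0 _ _].
have eD : X - (X + t *: D) = U *m rdiag m n (fun i => t * drop_head K (sigma X) i) *m V^T.
  by rewrite rdiagZ -scalemxAr -scalemxAl opprD addNKr scalerN opprK.
apply: (le_trans (nucnorm_le_orthogonal Uo Vo eD)).
rewrite /TK mulr_sumr -(sum_drop_head K) le_eqVlt; apply/orP; left.
apply/eqP; apply: eq_bigr => i _; rewrite /drop_head.
by case: ifP; rewrite ?mulr0 ?normr0 // ger0_norm ?mulr_ge0.
Qed.

Lemma dquot_along_tail_le (f : 'M[R]_(m, n) -> R) (M gamma t : R) :
  0 < t <= 1 -> `|f X - f (X + t *: D)| <= M * nucnorm (X - (X + t *: D)) ->
  dquot (fun Y => f Y + gamma * TK K Y) X D t <= (Num.max M 0 - gamma) * TK K X.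
Proof.
move=> /andP[t0 t1] lip; have T0 := TK_ge0 K X.
have N0 : 0 <= nucnorm (X - (X + t *: D)) by apply: sumr_ge0 => i _; apply: sigma_ge0.
have M0 : 0 <= Num.max M 0 by rewrite le_max lexx orbT.
have df : f (X + t *: D) - f X <= Num.max M 0 * (t * TK K X).
  apply: le_trans (ler_norm _) _; rewrite distrC.
  apply: le_trans lip _; apply: le_trans (ler_wpM2r N0 (_ : M <= Num.max M 0)) _.
    by rewrite le_max lexx.
  exact/ler_wpM2l/nucnorm_along_tail/ltW.
have t01 : 0 <= t <= 1 by rewrite ltW.
rewrite /dquot ler_pdivrMr // TK_along_tail //; nra.
Qed.

End AlongTail.

Theorem mainTheorem16 (R : realType) (m n K : nat) (gamma M : R)
    (f : 'M[R]_(m, n) -> \bar R) (C : set 'M[R]_(m, n)) (Xs : 'M[R]_(m, n)) :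
  (m <= n)%N -> (K < m)%N -> 0 < gamma ->
  (forall X, C X -> f X \is a fin_num) ->
  condC1 K C ->
  dir_diff_on (fun X => fine (f X)) C ->
  lipschitz_nuc_on (fun X => fine (f X)) C M ->
  d_stationary (fun X => fine (f X) + gamma * TK K X) C Xs ->
  M < gamma ->
  TK K Xs = 0.
Proof.
move=> _ _ gamma0 _ C1 _ lip [CXs stat] Mgamma.
have [U [V [Uo Vo eXs feasD]]] := C1 Xs CXs.
have Xs_svd : is_svd Xs U (sigma Xs) V.
  by split=> //; case: (sigmaP Xs) => [[? [? [_ _ _ ok]]]|->].
have [L dquot_L L0] := stat _ feasD.
have [s' s'0 CXtD] := feasD.
have : L <= (Num.max M 0 - gamma) * TK K Xs.
  apply: (cvgr_to_le dquot_L); near=> t.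
  have t0 : 0 < t by near: t; apply: nbhs_right_gt.
  have t1 : t < 1 by near: t; apply: nbhs_right_lt; apply: ltr01.
  have ts' : t < s' by near: t; apply: nbhs_right_lt.
  apply: (@dquot_along_tail_le _ _ _ K _ _ _ Xs_svd (fun X => fine (f X)) M gamma t).
    by rewrite t0 ltW.
  exact: lip (CXtD t t0 ts').
have := TK_ge0 K Xs; have : Num.max M 0 < gamma by rewrite gt_max Mgamma gamma0.
nra.
Unshelve. all: end_near.
Qed.
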